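(* Let $v\equiv 3$ or $15\pmod{18}$ with $v>3$, and let $S=(\mathbb{Z}_v,\mathcal{B})$ be a cyclic $\mathrm{STS}(v)$ (with cyclic automorphism $i\mapsto i+1\bmod v$). Then $S$ admits a zero-sum $4$-flow. Moreover, if $S$ has a full orbit of Type $1$ or of Type $3$, then $S$ admits a zero-sum $3$-flow.
   Context: A Steiner triple system $\mathrm{STS}(v)$ is a pair $(X,\mathcal{B})$ with $|X|=v$ and $\mathcal{B}$ a collection of 3-subsets of $X$ such that every 2-subset lies in exactly one block. It is cyclic if (after relabeling) $X=\mathbb{Z}_v$ and $\alpha:i\mapsto i+1\pmod v$ maps blocks to blocks. Blocks are partitioned into orbits under $\langle\alpha\rangle$; an orbit of size $v$ is a full orbit, and for $v\equiv3\pmod6$ there is exactly one other (short) orbit, that of $\{0,v/3,2v/3\}$. When $3\mid v$, an orbit is of Type $i$ ($i=1,2,3$) if each of its blocks contains elements of exactly $i$ distinct residue classes mod $3$. For integer $n\ge2$, a zero-sum $n$-flow is a map $f:\mathcal{B}\to\{\pm1,\ldots,\pm(n-1)\}$ with $\sum_{B\ni x} f(B)=0$ for every point $x$. *)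

(* Points of the STS are 'I_v (integers mod v), and the
   cyclic automorphism alpha : i |-> i+1 mod v is fintype's [ordS]. *)
From mathcomp Require Import all_boot all_order all_algebra.
Set Implicit Arguments. Unset Strict Implicit. Unset Printing Implicit Defensive.
Import Order.TTheory GRing.Theory Num.Theory.

Definition shift (v : nat) (B : {set 'I_v}) : {set 'I_v} := [set ordS x | x in B].

Definition is_STS (v : nat) (Bs : {set {set 'I_v}}) : Prop :=
  (forall B, B \in Bs -> #|B| = 3%N) /\
  (forall x y : 'I_v, x != y -> #|[set B in Bs | (x \in B) && (y \in B)]| = 1%N).

Definition is_cyclic (v : nat) (Bs : {set {set 'I_v}}) : Prop :=
  forall B, B \in Bs -> shift B \in Bs.

Definition zero_sum_flow (v n : nat) (Bs : {set {set 'I_v}})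
  (f : {set 'I_v} -> int) : Prop :=
  (forall B, B \in Bs -> (f B != 0%R) && (`|f B|%N < n)%N) /\
  (forall x : 'I_v, (\sum_(B in Bs | x \in B) f B)%R = 0%R).

Definition block_orbit (v : nat) (B : {set 'I_v}) : {set {set 'I_v}} :=
  [set iter k (@shift v) B | k : 'I_v].

Definition ntype (v : nat) (B : {set 'I_v}) : nat :=
  size (undup [seq (val x %% 3)%N | x <- enum B]).

Definition orbit_of_type (v : nat) (B : {set 'I_v}) (i : nat) : Prop :=
  forall C, C \in block_orbit B -> ntype C = i.

(* Write v = 3m (so m is odd, m >= 5 and 3 does not divide m) and view the
   points as the ring Z_v; cyclicity makes every translation B |-> B + t map
   blocks to blocks.
   - Counting pairs gives #|Bs| = v(v-1)/6, which is prime to 3, so translation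
     by m fixes some block: the short orbit {x, x+m, x+2m} exists, and exactly
     one short block passes through each point.
   - Flow template: fix a full orbit O = {B0 + t}.  Give B0 + t the weight w0 or
     w1 according as t = 0 (mod 3) or not, give short blocks the value u, and
     give each other full orbit a sign +-1, chosen with total P in {0, 1}.  A full
     orbit covers every point three times, so the net flow at x is
     sum_(a in B0) w(x - a) + u + 3P.
   - w0 = w1 = -1 - P, u = 3 gives a zero-sum 4-flow.  If B0 meets the three
     classes mod 3 the sum is w0 + 2 w1, and w1 = -1, u = 1, w0 = 1 or -2 gives
     a zero-sum 3-flow.  A Type 3 full orbit provides such a B0 directly; from a
     Type 1 block one is obtained by counting same-class pairs of points. *)

From mathcomp Require Import all_boot all_order all_algebra zify ring.
Set Implicit Arguments. Unset Strict Implicit. Unset Printing Implicit Defensive.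
Import Order.TTheory GRing.Theory Num.Theory.
Local Open Scope ring_scope.

Lemma card_set3 (T : finType) (a b c : T) :
  a != b -> a != c -> b != c -> #|[set a; b; c]| = 3%N.
Proof.
move=> ab ac bc.
by rewrite setUC cardsU1 cards2 !inE ab negb_or ![c == _]eq_sym ac bc.
Qed.

Lemma set3_eq (T : finType) (B : {set T}) a b c : #|B| = 3%N ->
  a \in B -> b \in B -> c \in B -> a != b -> a != c -> b != c -> B = [set a; b; c].
Proof.
move=> cB aB bB cB' ab ac bc; apply/esym/eqP.
rewrite eqEcard card_set3 // cB leqnn andbT.
by apply/subsetP => x; rewrite !inE => /orP [/orP [] |] /eqP ->.
Qed.

Lemma set3_split (T : finType) (B : {set T}) : #|B| = 3%N ->
  exists a b c, [/\ a \notin [set b; c], b != c & B = a |: [set b; c]].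
Proof.
move=> cB; have [a aB] : exists a, a \in B by apply/set0Pn; rewrite -card_gt0 cB.
have : #|B :\ a| == 2%N.
  by have := cardsD1 a B; rewrite aB cB /= => e; apply/eqP; lia.
case/cards2P => b [c [bc E]]; exists a, b, c; split => //.
  by rewrite -E !inE eqxx.
by rewrite -E setD1K.
Qed.

(* A fixed-point-free map of order 3 stabilising A splits A into 3-cycles,
   so 3 divides #|A|.  This is the counting behind the existence of short blocks. *)
Lemma order3_dvd_card (T : finType) (s : T -> T) (A : {set T}) :
  (forall x, x \in A -> s x \in A) -> (forall x, s (s (s x)) = x) ->
  (forall x, x \in A -> s x != x) -> (3 %| #|A|)%N.
Proof.
move=> + s3.
have [k] := ubnP #|A|; elim: k A => // k IH A Ak sA sfix.
case: (set_0Vmem A) => [->|[x xA]]; first by rewrite cards0.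
set O := [set x; s x; s (s x)].
have sx : s x != x := sfix x xA.
have ssx : s (s x) != s x := sfix _ (sA _ xA).
have ssx2 : s (s x) != x.
  by apply: contraNneq sx => e; rewrite -[X in _ == X](s3 x) e.
have OA : O \subset A.
  by apply/subsetP => y; rewrite !inE => /orP [/orP [] |] /eqP ->; rewrite ?sA.
have cO : #|O| = 3%N by rewrite card_set3 // eq_sym.
have back y : s y \in O -> y \in O.
  by rewrite !inE => /orP [/orP [] |] /eqP e; rewrite -(s3 y) e ?s3 ?eqxx ?orbT.
have cA := cardsID O A; rewrite (setIidPr OA) cO in cA.
have : (3 %| #|A :\: O|)%N.
  apply: IH => [|y|y]; first by move: Ak; rewrite -cA; lia.
    rewrite !in_setD => /andP [yO yA]; rewrite sA // andbT.
    by apply: contra yO; apply: back.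
  by rewrite in_setD => /andP [_ yA]; apply: sfix.
by rewrite -cA dvdn_addr.
Qed.

Lemma balanced_signs (T : finType) (A : {set T}) : exists psi : T -> int,
  (forall x, x \in A -> psi x = 1 \/ psi x = -1) /\
  (\sum_(x in A) psi x = 0 \/ \sum_(x in A) psi x = 1).
Proof.
have [k] := ubnP #|A|; elim: k A => // k IH A Ak.
case: (set_0Vmem A) => [->|[x xA]].
  by exists (fun _ => 1); split; [move=> y; rewrite inE | left; rewrite big_set0].
have [psi [psi_sign psi_sum]] : exists psi : T -> int,
  (forall y, y \in A :\ x -> psi y = 1 \/ psi y = -1) /\
  (\sum_(y in A :\ x) psi y = 0 \/ \sum_(y in A :\ x) psi y = 1).
  by apply: IH; move: Ak; rewrite (cardsD1 x A) xA; lia.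
pose c : int := if \sum_(y in A :\ x) psi y == 0 then 1 else -1.
exists (fun y => if y == x then c else psi y); split.
  move=> y yA; case: eqP => [_|/eqP yx]; first by rewrite /c; case: ifP; auto.
  by apply: psi_sign; rewrite !inE yx yA.
rewrite (bigD1 x) //= eqxx.
rewrite (eq_big (fun y => y \in A :\ x) psi); first last.
- by move=> y /andP [_ /negbTE ->].
- by move=> y; rewrite !inE andbC.
by rewrite /c; case: psi_sum => ->; rewrite ?eqxx; [right | left].
Qed.

Lemma uniq_map_inj_in (T1 T2 : eqType) (g : T1 -> T2) (s : seq T1) :
  uniq (map g s) -> {in s &, injective g}.
Proof.
elim: s => // a s IH /= /andP [fa us] x y; rewrite !inE.
case/orP => [/eqP ->|xs]; case/orP => [/eqP ->|ys] // e.
- by move: fa; rewrite e (map_f g ys).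
- by move: fa; rewrite -e (map_f g xs).
- exact: IH.
Qed.

(* Throughout, v = n.+2, so that the point set 'I_v is the ring Z_v. *)
Section CyclicSTS.
Variable n : nat.
Local Notation N := n.+2.
Local Notation pt := 'I_N.

Definition translate (t : pt) (B : {set pt}) : {set pt} := [set x + t | x in B].

Lemma mem_translate t B x : (x \in translate t B) = (x - t \in B).
Proof.
apply/imsetP/idP => [[y yB ->]|xB]; first by rewrite addrK.
by exists (x - t) => //; rewrite subrK.
Qed.

Lemma translate0 B : translate 0 B = B.
Proof. by apply/setP => x; rewrite mem_translate subr0. Qed.

Lemma translateD s t B : translate s (translate t B) = translate (t + s) B.
Proof.
apply/setP => x; rewrite !mem_translate opprD addrA.
by rewrite [X in _ = (X \in _)]addrAC.
Qed.

Lemma translateC s t B : translate s (translate t B) = translate t (translate s B).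
Proof. by rewrite !translateD addrC. Qed.

Lemma translateK t B : translate (- t) (translate t B) = B.
Proof. by rewrite translateD subrr translate0. Qed.

Lemma translate_inj t : injective (translate t).
Proof. by move=> A B E; rewrite -(translateK t A) E translateK. Qed.

Lemma card_translate t B : #|translate t B| = #|B|.
Proof. by apply: card_imset; apply: addIr. Qed.

Lemma iter_shift k B : iter k (@shift N) B = translate k%:R B.
Proof.
have shift1 C : shift C = translate 1 C.
  by apply: eq_imset => x; apply: val_inj; rewrite /= /ordS /= modnDmr addn1.
elim: k => [|k IH] /=; first by rewrite translate0.
by rewrite IH shift1 translateD -[k.+1]addn1 natrD.
Qed.

Variable Bs : {set {set pt}}.
Hypothesis sts : is_STS Bs.
Hypothesis cyclic : is_cyclic Bs.

Lemma block_card B : B \in Bs -> #|B| = 3%N.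
Proof. by case: sts => H _; apply: H. Qed.

Lemma translate_block t B : B \in Bs -> translate t B \in Bs.
Proof.
move=> BB; rewrite -(natr_Zp t) -iter_shift.
by elim: (val t) => [|k IH] //=; apply: cyclic.
Qed.

Lemma translate_blockE t B : (translate t B \in Bs) = (B \in Bs).
Proof.
apply/idP/idP => [|]; last exact: translate_block.
by move=> h; rewrite -(translateK t B); apply: translate_block.
Qed.

Lemma block_through x y : x != y -> exists2 B, B \in Bs & (x \in B) && (y \in B).
Proof.
case: sts => _ H /H /eqP /cards1P [B EB].
have : B \in [set B in Bs | (x \in B) && (y \in B)] by rewrite EB set11.
by rewrite inE => /andP [] ?; exists B.
Qed.

(* Summing over blocks the ordered pairs of distinct points they contain
   enumerates every ordered pair of distinct points exactly once. *)
Lemma sum_over_pairs (g : pt -> pt -> int) :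
  \sum_(B in Bs) \sum_(p in B) \sum_(q in B | q != p) g p q
  = \sum_p \sum_(q | q != p) g p q.
Proof.
transitivity (\sum_(B in Bs) \sum_p \sum_(q | q != p)
   (if (p \in B) && (q \in B) then g p q else 0)).
  apply: eq_bigr => B _; rewrite [RHS](bigID (fun p => p \in B)) /=.
  rewrite [X in _ = _ + X]big1 ?addr0; last first.
    by move=> p /negbTE pB; apply: big1 => q _; rewrite pB.
  apply: eq_bigr => p pB; rewrite big_mkcondl /=.
  by apply: eq_bigr => q _; rewrite pB.
rewrite exchange_big /=; apply: eq_bigr => p _.
rewrite exchange_big /=; apply: eq_bigr => q qp.
rewrite -big_mkcondr /= (eq_bigl [in [set B in Bs | (p \in B) && (q \in B)]]).
  by rewrite sumr_const; case: sts => _ ->; rewrite // eq_sym.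
by move=> B; rewrite inE.
Qed.

Lemma sum_cond_const (B : {set pt}) p (c : int) :
  \sum_(q in B | q != p) c = c *+ #|B :\ p|.
Proof. by rewrite -sumr_const; apply: eq_bigl => q; rewrite !inE andbC. Qed.

Lemma card_blocks : (#|Bs| * 6 = N * (N - 1))%N.
Proof.
have := sum_over_pairs (fun _ _ => 1).
rewrite (eq_bigr (fun B => 6%:R)); last first.
  move=> B BB; rewrite (eq_bigr (fun p => 2%:R)) ?sumr_const ?block_card //.
  move=> p pB; have e : #|B :\ p| = 2%N.
    by have := cardsD1 p B; rewrite pB block_card //= => e; lia.
  by rewrite sum_cond_const e.
rewrite [X in _ = X -> _](eq_bigr (fun p => (N - 1)%:R)); last first.
  move=> p _; rewrite (eq_bigl [in [set~ p]]); last by move=> q; rewrite !inE.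
  by rewrite sumr_const cardsC1 card_ord subn1.
by rewrite !sumr_const card_ord => h; lia.
Qed.

Definition flow_at (f : {set pt} -> int) x := \sum_(B in Bs | x \in B) f B.

Lemma flow_at_invariant f :
  (forall t B, B \in Bs -> f (translate t B) = f B) ->
  forall x, flow_at f x = flow_at f 0.
Proof.
move=> Hf x; rewrite /flow_at (reindex_inj (@translate_inj x)) /=.
apply: eq_big => [B|B /andP [+ _]]; last by rewrite translate_blockE; apply: Hf.
by rewrite translate_blockE mem_translate subrr.
Qed.

(* Spreading a value F C over the three translates of C through 0 by each of
   its points: every block C through 0 is counted three times. *)
Lemma sum_translates_through0 (F : {set pt} -> int) :
  \sum_(B in Bs | 0 \in B) \sum_(y in B) F (translate (- y) B)
  = (\sum_(C in Bs | 0 \in C) F C) *+ 3.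
Proof.
transitivity (\sum_y \sum_C
   (if (C \in Bs) && (0 \in C) && (- y \in C) then F C else 0)).
  rewrite (eq_bigr (fun B : {set pt} =>
     \sum_y if y \in B then F (translate (- y) B) else 0));
    last by move=> B _; rewrite big_mkcond.
  rewrite exchange_big /=; apply: eq_bigr => y _.
  rewrite (reindex_inj (@translate_inj y)) /= big_mkcond /=; apply: eq_bigr => C _.
  rewrite translate_blockE !mem_translate sub0r subrr translateK.
  by case: (C \in Bs); case: (0 \in C); case: (- y \in C).
rewrite exchange_big /= -sumrMnl [RHS]big_mkcond /=; apply: eq_bigr => C _.
case: ifP => [/andP [CB C0]|_]; last by apply: big1.
rewrite -big_mkcond /= sumr_const.
suff -> : #|[pred y | - y \in C]| = 3%N by [].
rewrite -(block_card CB) -(card_image (@oppr_inj _)); apply: eq_card => y.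
apply/imageP/idP => [[x xP ->]|yC]; first by rewrite inE in xP.
by exists (- y); rewrite ?inE opprK.
Qed.

(* From now on v = 3m with m odd, m >= 5 and m prime to 3. *)
Hypothesis v_mod18 : (N %% 18 = 3 \/ N %% 18 = 15)%N.
Hypothesis v_gt3 : (3 < N)%N.

Definition third := (N %/ 3)%N.
Definition third_pt : pt := third%:R.

Lemma v_eq : N = (3 * third)%N.
Proof. rewrite /third; lia. Qed.

Lemma third_ge5 : (5 <= third)%N.
Proof. rewrite /third; lia. Qed.

Lemma val_third : val third_pt = third.
Proof.
by rewrite /third_pt Zp_nat /= modn_small //; have := v_eq; have := third_ge5; lia.
Qed.

Lemma third_neq0 : third_pt != 0.
Proof. by apply/eqP => /(congr1 val); rewrite val_third /=; have := third_ge5; lia. Qed.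

Lemma thrice_third : third_pt + third_pt + third_pt = 0.
Proof.
apply: val_inj => /=; rewrite val_third modnDml.
by rewrite (_ : (third + third + third = N)%N) ?modnn //; have := v_eq; lia.
Qed.

Lemma order3_elements (t : pt) : t + t + t = 0 -> t != 0 ->
  t = third_pt \/ t = third_pt + third_pt.
Proof.
move/(congr1 val) => /= h tn0.
have tv : (t : nat) != 0%N by apply: contra tn0 => /eqP e; apply/eqP/val_inj.
have ht := ltn_ord t; have := v_eq; have := third_ge5.
move: h; rewrite modnDml => h E m5.
have [q q3 e] : exists2 q, (q < 3)%N & (t + t + t = q * N + 0)%N.
  by exists ((t + t + t) %/ N)%N; [rewrite ltn_divLR; lia | rewrite -h; exact: divn_eq].
move: q3 e; case: q => [|[|[|q]]] //= _ e.
- by move: tv; lia.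
- by left; apply: val_inj; rewrite /= val_third; lia.
- right; apply: val_inj; rewrite /= val_third modn_small; lia.
Qed.

(* Z_v has odd order, so it has no element of order 2. *)
Lemma double_eq0 (t : pt) : t + t = 0 -> t = 0.
Proof.
move/(congr1 val) => /= h; apply: val_inj => /=.
have ht := ltn_ord t; have := v_eq; have := v_mod18 => hv E.
have [q q2 e] : exists2 q, (q < 2)%N & (t + t = q * N + 0)%N.
  by exists ((t + t) %/ N)%N; [rewrite ltn_divLR; lia | rewrite -h; exact: divn_eq].
by move: q2 e; case: q => [|[|q]] //= _; lia.
Qed.

(* v(v-1)/6 = m(3m-1)/2 is not a multiple of 3. *)
Lemma card_blocks_ndvd3 : ~~ (3 %| #|Bs|)%N.
Proof.
apply/negP => /dvdnP [k Ek]; have := card_blocks; rewrite Ek; have := v_mod18; nia.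
Qed.

Definition short_block (B : {set pt}) :=
  [exists t : pt, (t != 0) && (translate t B == B)].

Lemma short_block_translate s (B : {set pt}) :
  short_block (translate s B) = short_block B.
Proof.
apply/existsP/existsP => -[t /andP [t0 /eqP E]]; exists t; rewrite t0 /=; apply/eqP.
- by apply: (@translate_inj s); rewrite translateC.
- by rewrite translateC E.
Qed.

Lemma translate_free (B : {set pt}) s t :
  ~~ short_block B -> translate s B = translate t B -> s = t.
Proof.
move=> ns E; apply/eqP; rewrite -subr_eq0; apply: contraNT ns => st.
apply/existsP; exists (s - t); rewrite st /=; apply/eqP.
by rewrite -[RHS](translateK t) -E translateD.
Qed.

Lemma short_block_shape (B : {set pt}) (x : pt) :
  #|B| = 3%N -> short_block B -> x \in B ->
  B = [set x; x + third_pt; x + third_pt + third_pt].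
Proof.
move=> cB /existsP [t /andP [t0 /eqP E]] xB.
have stable y : y \in B -> y + t \in B by move=> yB; rewrite -E mem_translate addrK.
have neq (y a b : pt) : a != b -> y + a != y + b by rewrite (inj_eq (addrI y)).
have t2 : t + t != 0 by apply: contra t0 => /eqP /double_eq0 ->.
have EB : B = [set x; x + t; x + t + t].
  apply: set3_eq; rewrite ?stable //.
  - by rewrite -{1}[x]addr0 neq // eq_sym.
  - by rewrite -{1}[x]addr0 -addrA neq // eq_sym.
  - by rewrite -{1}[x + t]addr0 neq // eq_sym.
have t3 : t + t + t = 0.
  move: (stable _ (stable _ (stable _ xB))); rewrite {1}EB !inE.
  case/orP => [/orP [] |] /eqP h.
  - by apply: (@addrI _ x); rewrite ?addrA addr0.
  - by case/eqP: t2; apply: (@addrI _ (x + t)); rewrite ?addrA addr0.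
  - by case/eqP: t0; apply: (@addrI _ (x + t + t)); rewrite addr0.
rewrite EB; case: (order3_elements t3 t0) => -> //.
have -> : x + (third_pt + third_pt) + (third_pt + third_pt)
        = x + third_pt + (third_pt + third_pt + third_pt) by ring.
rewrite thrice_third addr0 (_ : x + (third_pt + third_pt) = x + third_pt + third_pt).
  by apply/setP => y; rewrite !inE orbAC.
by ring.
Qed.

(* Translation by m permutes the blocks with orbits of size 1 or 3; since #|Bs|
   is prime to 3 some block is fixed, i.e. the short orbit exists. *)
Lemma exists_short_block : exists2 B, B \in Bs & short_block B.
Proof.
case: (boolP [exists B in Bs, short_block B]) => [/existsP [B /andP [BB sB]]|H].
  by exists B.
case/negP: card_blocks_ndvd3.
apply: (@order3_dvd_card _ (translate third_pt)) => [B|B|B BB].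
- exact: translate_block.
- by rewrite !translateD ?addrA thrice_third translate0.
apply: contra H => /eqP E; apply/existsP; exists B; rewrite BB /=.
by apply/existsP; exists third_pt; rewrite third_neq0 E /=.
Qed.

Lemma short_block_through x : #|[set B in Bs | (x \in B) && short_block B]| = 1%N.
Proof.
have [B0 B0B sB0] := exists_short_block.
have [y yB0] : exists y, y \in B0 by apply/set0Pn; rewrite -card_gt0 block_card.
have xB0 : x \in translate (x - y) B0 by rewrite mem_translate opprB addrC subrK.
apply/eqP/cards1P; exists (translate (x - y) B0); apply/setP => C; rewrite !inE.
apply/andP/eqP => [[CB /andP [xC sC]]|->].
  rewrite (short_block_shape (block_card CB) sC xC) (short_block_shape _ _ xB0) //.
  - by rewrite card_translate block_card.
  - by rewrite short_block_translate.
by rewrite translate_block // xB0 short_block_translate.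
Qed.

Lemma card_short_blocks : (#|[set B in Bs | short_block B]| * 3 = N)%N.
Proof.
set Sh := [set B in Bs | short_block B].
have h1 : \sum_(B in Sh) (#|B|%:R : int) = (#|Sh| * 3)%:R.
  rewrite (eq_bigr (fun _ => 3%:R)); first by rewrite sumr_const [RHS]natrM mulr_natl.
  by move=> B; rewrite inE => /andP [BB _]; rewrite block_card.
have h2 : \sum_(B in Sh) (#|B|%:R : int) = N%:R.
  transitivity (\sum_(B in Sh) \sum_x (if x \in B then 1 else 0 : int)).
    by apply: eq_bigr => B _; rewrite -big_mkcond sumr_const.
  rewrite exchange_big /= (eq_bigr (fun _ => 1)); first by rewrite sumr_const card_ord.
  move=> x _; rewrite -big_mkcondr /=.
  rewrite (eq_bigl [in [set B in Bs | (x \in B) && short_block B]]).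
    by rewrite sumr_const short_block_through.
  by move=> B /=; rewrite !inE; case: (B \in Bs); case: (x \in B); case: (short_block B).
by move: h1; rewrite h2 => /eqP; rewrite eqr_nat => /eqP.
Qed.

(* Residue class mod 3 of a point; it is compatible with Z_v because 3 | v. *)
Definition cls (x : pt) := (val x %% 3)%N.

Lemma cls_lt3 x : (cls x < 3)%N.
Proof. by rewrite /cls ltn_mod. Qed.

Lemma cls_sub_inj (x a b : pt) : cls (x - a) = cls (x - b) -> cls a = cls b.
Proof.
rewrite /cls /= => h.
have la := ltn_ord a; have lb := ltn_ord b; have lx := ltn_ord x; have := v_eq.
move: h; case: (val a) la => [|a'] la; case: (val b) lb => [|b'] lb;
  rewrite ?subn0 ?modnn ?addn0 ?modnDmr; lia.
Qed.

Lemma card_cls r : (r < 3)%N -> #|[set q : pt | cls q == r]| = third.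
Proof.
move=> r3; rewrite -sum1dep_card big_mkcond /=.
have count_mod3 k : (\sum_(0 <= i < 3 * k) ((i %% 3 == r) : nat) = k)%N.
  elim: k => [|k IH]; first by rewrite muln0 big_geq.
  rewrite mulnSr addn3 !big_nat_recr //= IH.
  have e0 : ((3 * k) %% 3 = 0)%N by lia.
  have e1 : ((3 * k).+1 %% 3 = 1)%N by lia.
  have e2 : ((3 * k).+2 %% 3 = 2)%N by lia.
  by rewrite e0 e1 e2; move: r3 IH; case: r => [|[|[|]]] //= _ _; lia.
rewrite -[RHS](count_mod3 third) -v_eq big_mkord.
by apply: eq_bigr => i _; rewrite /cls; case: (_ == r).
Qed.

Definition same_cls_pairs (B : {set pt}) : int :=
  \sum_(p in B) \sum_(q in B | q != p) (cls p == cls q)%:R.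

Lemma sum_same_cls_pairs : \sum_(B in Bs) same_cls_pairs B = (N * (third - 1))%:R.
Proof.
rewrite /same_cls_pairs sum_over_pairs (eq_bigr (fun _ => (third - 1)%:R)).
  by rewrite sumr_const card_ord [RHS]natrM [RHS]mulrC mulr_natr.
move=> p _; rewrite (eq_bigr (fun q => if cls q == cls p then 1 else 0)).
  rewrite -big_mkcondr (eq_bigl [in [set q | cls q == cls p] :\ p]).
    rewrite sumr_const; have := cardsD1 p [set q : pt | cls q == cls p].
    by rewrite card_cls ?cls_lt3 // !inE eqxx /= => ->; rewrite addKn.
  by move=> q; rewrite !inE andbC.
by move=> q _; rewrite eq_sym; case: (_ == _).
Qed.

Lemma same_cls_pairs_ge2 (B : {set pt}) p q : p \in B -> q \in B -> p != q ->
  cls p = cls q -> 2 <= same_cls_pairs B.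
Proof.
move=> pB qB pq r.
have one x y : x \in B -> y \in B -> y != x -> cls x = cls y ->
    1 <= \sum_(z in B | z != x) (cls x == cls z)%:R :> int.
  move=> xB yB yx rxy; rewrite (bigD1 y) /=; last by rewrite yB yx.
  by rewrite rxy eqxx -[1]addr0 lerD // sumr_ge0 // => z _; rewrite ler0n.
rewrite /same_cls_pairs (bigD1 p) //= [X in _ <= _ + X](bigD1 q) /=; last first.
  by rewrite qB eq_sym.
rewrite (_ : 2 = 1 + (1 + 0)) //; apply: lerD.
  by apply: one pB qB _ r; rewrite eq_sym.
apply: lerD; first exact: one qB pB pq (esym r).
by do 2!apply: sumr_ge0 => ? _; rewrite ler0n.
Qed.

Lemma same_cls_pairs_cases (B : {set pt}) :
  same_cls_pairs B = 0 \/ 2 <= same_cls_pairs B.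
Proof.
case: (boolP [exists p in B, exists q in B, (q != p) && (cls p == cls q)]).
  case/existsP => p /andP [pB /existsP [q /andP [qB /andP [qp /eqP r]]]].
  by right; apply: same_cls_pairs_ge2 pB qB _ r; rewrite eq_sym.
move/existsPn => H; left; apply: big1 => p pB; apply: big1 => q /andP [qB qp].
by move: (H p); rewrite pB /= => /existsPn /(_ q); rewrite qB qp /= => /negbTE ->.
Qed.

Lemma same_cls_pairs0_inj (B : {set pt}) :
  same_cls_pairs B = 0 -> {in B &, injective cls}.
Proof.
move=> e p q pB qB r; apply/eqP/negPn/negP => pq.
by have := same_cls_pairs_ge2 pB qB pq r; rewrite e.
Qed.

Lemma same_cls_pairs_const (B : {set pt}) : #|B| = 3%N ->
  {in B &, forall p q, cls p = cls q} -> same_cls_pairs B = 6.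
Proof.
move=> cB H; rewrite /same_cls_pairs (eq_bigr (fun p => 2%:R)) ?sumr_const ?cB //.
move=> p pB; rewrite (eq_bigr (fun q => 1)); last first.
  by move=> q /andP [qB _]; rewrite (H p q pB qB) eqxx.
have e : #|B :\ p| = 2%N by have := cardsD1 p B; rewrite pB cB /= => e; lia.
by rewrite sum_cond_const e.
Qed.

(* If some block lies in one class, then the blocks with a repeated class,
   each contributing at least 2 and that block 6, bound the total v(m-1). *)
Lemma repeated_cls_blocks_bound B1 : B1 \in Bs ->
  {in B1 &, forall p q, cls p = cls q} ->
  (#|[set B in Bs | same_cls_pairs B != 0]| * 2 + 4 <= N * (third - 1))%N.
Proof.
move=> B1B H1.
pose two (B : {set pt}) : int := if same_cls_pairs B != 0 then 2 else 0.
have sum_two : \sum_(B in Bs) two B = (#|[set B in Bs | same_cls_pairs B != 0]| * 2)%:R.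
  rewrite -big_mkcondr /= (eq_bigl [in [set B in Bs | same_cls_pairs B != 0]]).
    by rewrite sumr_const natrM mulr_natl.
  by move=> B; rewrite inE.
have excess : 4 <= \sum_(B in Bs) (same_cls_pairs B - two B).
  rewrite (bigD1 B1) //= /two same_cls_pairs_const ?block_card //.
  rewrite (_ : 4 = (6 - 2) + 0) //; apply: lerD => //.
  apply: sumr_ge0 => B _; case: (same_cls_pairs_cases B) => [->|ge2].
    by rewrite eqxx subr0.
  by rewrite ifT ?subr_ge0 // gt_eqF // (lt_le_trans _ ge2).
move: excess; rewrite sumrB sum_same_cls_pairs sum_two lerBrDl -natrD ler_nat.
by rewrite addnC.
Qed.

(* The arithmetic of the next lemma: with v = 3m, at most m blocks having no
   repeated class is incompatible with the bound above. *)
Lemma blocks_count_arith (v m nB b z s : nat) : v = (3 * m)%N -> (5 <= m)%N ->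
  (nB * 6 = v * (v - 1))%N -> (s * 3 = v)%N -> (z + b = nB)%N -> (z <= s)%N ->
  (b * 2 + 4 <= v * (m - 1))%N -> False.
Proof. by move=> -> *; nia. Qed.

(* A block inside one residue class forces a non-short block meeting all three
   classes: otherwise all such blocks are among the m short ones, and the bound
   above contradicts #|Bs| = m(3m-1)/2. *)
Lemma exists_transversal_block B1 : B1 \in Bs ->
  {in B1 &, forall p q, cls p = cls q} ->
  exists2 B, B \in Bs & ~~ short_block B /\ {in B &, injective cls}.
Proof.
move=> B1B H1.
case: (boolP [exists B in Bs, (same_cls_pairs B == 0) && ~~ short_block B]).
  case/existsP => B /and3P [BB /eqP e ns]; exists B => //.
  by split => //; apply: same_cls_pairs0_inj.
move/existsPn => noZ.
have sub : [set B in Bs | same_cls_pairs B == 0] \subset [set B in Bs | short_block B].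
  apply/subsetP => B; rewrite !inE => /andP [BB e]; rewrite BB /=.
  by move: (noZ B); rewrite BB e /= negbK.
exfalso; apply: (@blocks_count_arith N third #|Bs| _ _ _ v_eq third_ge5 card_blocks
  card_short_blocks _ (subset_leq_card sub) (repeated_cls_blocks_bound B1B H1)).
have := cardsID [set B | same_cls_pairs B == 0] Bs.
rewrite (_ : Bs :&: _ = [set B in Bs | same_cls_pairs B == 0]); last first.
  by apply/setP => B; rewrite !inE.
rewrite (_ : Bs :\: _ = [set B in Bs | same_cls_pairs B != 0]) //.
by apply/setP => B; rewrite !inE andbC.
Qed.

(* To pick one representative through 0 in each full orbit, rank blocks by
   their index in the enumeration of {set pt}; a block through 0 is canonical
   when no other translate of it through 0 has a smaller rank. *)
Definition block_rank (C : {set pt}) := val (enum_rank C).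
Definition canonical (C : {set pt}) :=
  [forall y in C, (block_rank C <= block_rank (translate (- y) C))%N].

Lemma exists_canonical_translate (B : {set pt}) x0 : x0 \in B ->
  exists2 y, y \in B & canonical (translate (- y) B).
Proof.
move=> x0B; case: (arg_minnP (fun y => block_rank (translate (- y) B)) x0B).
move=> y yB ymin; exists y => //; apply/forallP => z.
apply/implyP; rewrite mem_translate opprK => zB.
by rewrite translateD (_ : - y + - z = - (z + y)) ?ymin //; ring.
Qed.

Lemma canonical_translate_uniq (B : {set pt}) y z : ~~ short_block B ->
  y \in B -> z \in B ->
  canonical (translate (- y) B) -> canonical (translate (- z) B) -> y = z.
Proof.
move=> ns yB zB /forallP Ly /forallP Lz.
have := Ly (z - y); rewrite mem_translate opprK subrK zB /= translateD.
rewrite (_ : - y + - (z - y) = - z); last by ring.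
have := Lz (y - z); rewrite mem_translate opprK subrK yB /= translateD.
rewrite (_ : - z + - (y - z) = - y); last by ring.
move=> h1 h2.
have /val_inj : block_rank (translate (- y) B) = block_rank (translate (- z) B).
  by apply/eqP; rewrite eqn_leq h1 h2.
by move/enum_rank_inj/(translate_free ns)/oppr_inj.
Qed.

Section Template.
Variable B0 : {set pt}.
Hypothesis B0_block : B0 \in Bs.
Hypothesis B0_full : ~~ short_block B0.
Variable psi : {set pt} -> int.
Variables w0 w1 u : int.

Definition orbit0 := [set translate t B0 | t in [set: pt]].
Definition offset (B : {set pt}) := odflt 0 [pick t | translate t B0 == B].

Definition reps := [set C in Bs | [&& 0 \in C, C \notin orbit0,
                                      ~~ short_block C & canonical C]].

Definition weight r := if r == 0%N then w0 else w1.
Definition orbit_part (B : {set pt}) :=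
  if B \in orbit0 then weight (cls (offset B)) else 0.
Definition short_part (B : {set pt}) := if short_block B then u else 0.
Definition rep_sign (C : {set pt}) := if C \in reps then psi C else 0.
Definition sign_part (B : {set pt}) := \sum_(y in B) rep_sign (translate (- y) B).
Definition template (B : {set pt}) := orbit_part B + short_part B + sign_part B.

Lemma offset_translate t : offset (translate t B0) = t.
Proof.
rewrite /offset; case: pickP => [s /eqP E|H] /=; first exact: translate_free E.
by have := H t; rewrite eqxx.
Qed.

Lemma orbit0_translate s (B : {set pt}) : (translate s B \in orbit0) = (B \in orbit0).
Proof.
apply/imsetP/imsetP => [[t _ E]|[t _ ->]].
  by exists (t - s); rewrite ?inE // -[B](translateK s) E translateD.
by exists (t + s); rewrite ?inE // translateD.
Qed.

Lemma orbit0P (B : {set pt}) : B \in orbit0 -> B \in Bs /\ ~~ short_block B.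
Proof.
by case/imsetP => t _ ->; rewrite translate_block // short_block_translate.
Qed.

Lemma sign_part_translate t (B : {set pt}) : sign_part (translate t B) = sign_part B.
Proof.
rewrite /sign_part (reindex_inj (addIr t)) /=; apply: eq_big => [z|z _].
  by rewrite mem_translate addrK.
by rewrite translateD (_ : t + - (z + t) = - z) //; ring.
Qed.

(* Each representative C is spread over the three translates of C through x. *)
Lemma flow_at_sign_part x : flow_at sign_part x = (\sum_(C in reps) psi C) *+ 3.
Proof.
rewrite (flow_at_invariant (fun t B _ => sign_part_translate t B)).
rewrite /flow_at /sign_part sum_translates_through0 /rep_sign -big_mkcondr /=.
congr (_ *+ _); apply: eq_bigl => C.
by rewrite /reps inE; case: (C \in Bs); case: (0 \in C).
Qed.

Lemma flow_at_short_part x : flow_at short_part x = u.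
Proof.
rewrite /flow_at /short_part -big_mkcondr /=.
rewrite (eq_bigl [in [set B in Bs | (x \in B) && short_block B]]).
  by rewrite sumr_const short_block_through.
by move=> B; rewrite inE andbA.
Qed.

(* The blocks of O through x are the B0 + (x - a), a in B0. *)
Lemma flow_at_orbit_part x : flow_at orbit_part x = \sum_(a in B0) weight (cls (x - a)).
Proof.
rewrite /flow_at /orbit_part -big_mkcondr /=.
rewrite (eq_bigl (fun B => (B \in orbit0) && (x \in B))); last first.
  move=> B; apply/andP/andP => [[/andP [_ xB] BO]|[BO xB]]; first by [].
  by rewrite (orbit0P BO).1.
rewrite big_mkcondr /orbit0 big_imset /=; last by move=> s t _ _; apply: translate_free.
rewrite (reindex_inj (@subrI _ x)) /= [RHS]big_mkcond /=.
apply: eq_big => [a|a _]; first by rewrite inE.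
by rewrite mem_translate offset_translate subKr.
Qed.

Lemma flow_at_template x : flow_at template x =
  \sum_(a in B0) weight (cls (x - a)) + u + (\sum_(C in reps) psi C) *+ 3.
Proof.
rewrite /flow_at /template !big_split /= -/(flow_at _ x) -/(flow_at _ x).
rewrite -/(flow_at sign_part x) flow_at_orbit_part flow_at_short_part.
by rewrite flow_at_sign_part.
Qed.

Lemma sign_part0 (B : {set pt}) : (B \in orbit0) || short_block B -> sign_part B = 0.
Proof.
move=> BOs; apply: big1 => y _; rewrite /rep_sign ifF //; apply/negbTE.
rewrite inE orbit0_translate short_block_translate.
by case/orP: BOs => ->; rewrite !andbF.
Qed.

Lemma sign_part_rep (B : {set pt}) : B \in Bs -> B \notin orbit0 -> ~~ short_block B ->
  exists2 C, C \in reps & sign_part B = psi C.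
Proof.
move=> BB BO sB.
have [x0 x0B] : exists x0, x0 \in B by apply/set0Pn; rewrite -card_gt0 block_card.
have [y0 y0B Ly0] := exists_canonical_translate x0B.
have rep0 : translate (- y0) B \in reps.
  rewrite inE translate_block // mem_translate sub0r opprK y0B.
  by rewrite orbit0_translate BO short_block_translate sB.
exists (translate (- y0) B) => //.
rewrite /sign_part (bigD1 y0) //= big1 ?addr0; first by rewrite /rep_sign rep0.
move=> y /andP [yB yn]; rewrite /rep_sign ifF //; apply/negP; rewrite inE.
case/and5P => _ _ _ _ Ly; move/eqP: yn; apply.
exact: canonical_translate_uniq sB yB y0B Ly Ly0.
Qed.

Lemma template_values (B : {set pt}) : B \in Bs ->
  [\/ template B = w0, template B = w1, template B = u
    | exists2 C, C \in reps & template B = psi C].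
Proof.
move=> BB; rewrite /template /orbit_part /short_part.
case: (boolP (B \in orbit0)) => BO.
  rewrite sign_part0 ?BO // (negbTE (orbit0P BO).2) !addr0 /weight.
  by case: ifP => _; [constructor 1 | constructor 2].
case: (boolP (short_block B)) => sB.
  by rewrite sign_part0 ?sB ?orbT // add0r addr0; constructor 3.
have [C CR ->] := sign_part_rep BB BO sB.
by rewrite !add0r; constructor 4; exists C.
Qed.

(* If B0 meets the three classes, the points x - a (a in B0) do too, so the
   orbit O contributes w0 + 2 w1 at every point. *)
Lemma sum_weight_transversal x : {in B0 &, injective cls} ->
  \sum_(a in B0) weight (cls (x - a)) = w0 + w1 + w1.
Proof.
move=> inj; have [a [b [c [anb bc E]]]] := set3_split (block_card B0_block).
have aB : a \in B0 by rewrite E !inE eqxx.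
have bB : b \in B0 by rewrite E !inE eqxx orbT.
have cB : c \in B0 by rewrite E !inE eqxx !orbT.
have ab : a != b by apply: contraNneq anb => ->; rewrite !inE eqxx.
have ac : a != c by apply: contraNneq anb => ->; rewrite !inE eqxx orbT.
have D p q : p \in B0 -> q \in B0 -> p != q -> cls (x - p) != cls (x - q).
  by move=> pB qB; apply: contra => /eqP /cls_sub_inj /inj -> //.
rewrite E big_setU1 //= big_setU1 ?inE //= big_set1 addrA.
move: (D _ _ aB bB ab) (D _ _ aB cB ac) (D _ _ bB cB bc).
move: (cls_lt3 (x - a)) (cls_lt3 (x - b)) (cls_lt3 (x - c)); rewrite /weight.
by case: (cls (x - a)) => [|[|[|]]]; case: (cls (x - b)) => [|[|[|]]];
  case: (cls (x - c)) => [|[|[|]]] //= *; ring.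
Qed.
End Template.

(* The block through 0 and 1 is not short, since short blocks are cosets of {0, m, 2m}. *)
Lemma exists_full_block : exists2 B, B \in Bs & ~~ short_block B.
Proof.
have n01 : (0 : pt) != 1 by rewrite eq_sym oner_eq0.
have [B BB /andP [B0 B1]] := block_through n01; exists B => //.
have m5 := third_ge5; have vE := v_eq; have v1 : val (1 : pt) = 1%N by [].
apply/negP => sB; move: B1; rewrite (short_block_shape (block_card BB) sB B0) !inE !add0r.
by case/orP => [/orP [] |] /eqP /(congr1 val); rewrite /= ?v1 ?val_third ?modn_small; lia.
Qed.

Lemma zero_sum_4flow : exists f, zero_sum_flow 4%N Bs f.
Proof.
have [B0 B0B B0full] := exists_full_block.
have [psi [psi_sign psi_sum]] := balanced_signs (reps B0).
set P := \sum_(C in reps B0) psi C in psi_sum.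
exists (template B0 psi (-1 - P) (-1 - P) 3); split.
  move=> B BB; case: (template_values B0B B0full psi (-1 - P) (-1 - P) 3 BB)
    => [->|->|->|[C /psi_sign CR ->]] //; [case: psi_sum .. | case: CR] => -> //.
move=> x; have := flow_at_template B0B B0full psi (-1 - P) (-1 - P) 3 x.
rewrite /flow_at => ->; rewrite -/P.
rewrite (eq_bigr (fun _ => -1 - P)) => [|a _]; last by rewrite /weight; case: ifP.
by rewrite sumr_const block_card //; case: psi_sum => ->.
Qed.

Lemma zero_sum_3flow B0 : B0 \in Bs -> ~~ short_block B0 -> {in B0 &, injective cls} ->
  exists f, zero_sum_flow 3%N Bs f.
Proof.
move=> B0B B0full inj.
have [psi [psi_sign psi_sum]] := balanced_signs (reps B0).
set P := \sum_(C in reps B0) psi C in psi_sum.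
pose w0 : int := if P == 0 then 1 else -2.
exists (template B0 psi w0 (-1) 1); split.
  move=> B BB; case: (template_values B0B B0full psi w0 (-1) 1 BB)
    => [->|->|->|[C /psi_sign CR ->]] //; first by rewrite /w0; case: ifP.
  by case: CR => ->.
move=> x; have := flow_at_template B0B B0full psi w0 (-1) 1 x.
rewrite /flow_at => ->; rewrite -/P sum_weight_transversal // /w0.
by case: psi_sum => ->.
Qed.

Lemma ntype1_const (B : {set pt}) : ntype B = 1%N ->
  {in B &, forall p q, cls p = cls q}.
Proof.
rewrite /ntype; set s := map _ _.
have mem p : p \in B -> cls p \in undup s.
  by move=> pB; rewrite mem_undup map_f ?mem_enum.
case: (undup s) mem => [|r [|]] // mem _ p q pB qB.
by have := mem p pB; have := mem q qB; rewrite !inE => /eqP -> /eqP ->.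
Qed.

Lemma ntype3_inj (B : {set pt}) : #|B| = 3%N -> ntype B = 3%N ->
  {in B &, injective cls}.
Proof.
rewrite /ntype cardE => cB nt p q pB qB.
have u : uniq (map cls (enum B)).
  by apply/negPn; rewrite -ltn_size_undup size_map cB; apply/negP; rewrite nt ltnn.
by apply: (uniq_map_inj_in u); rewrite mem_enum.
Qed.

Lemma mem_block_orbit (B : {set pt}) : B \in block_orbit B.
Proof. by apply/imsetP; exists ord0. Qed.

Lemma full_orbit_not_short (B : {set pt}) :
  #|block_orbit B| = N -> ~~ short_block B.
Proof.
move=> cO; apply/negP => /existsP [t /andP [t0 /eqP E]].
have /imset_injP inj : #|block_orbit B| == #|'I_N| by rewrite cO card_ord.
suff t_eq0 : t = ord0 by rewrite t_eq0 in t0.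
by apply: inj => //; rewrite /= !iter_shift natr_Zp E.
Qed.
End CyclicSTS.

Local Close Scope ring_scope.

Theorem mainTheorem6 (v : nat) (Bs : {set {set 'I_v}}) :
  (3 < v)%N -> (v %% 18 = 3 \/ v %% 18 = 15)%N ->
  is_STS Bs -> is_cyclic Bs ->
  (exists f, zero_sum_flow 4 Bs f) /\
  ((exists B, [/\ B \in Bs, #|block_orbit B| = v &
                  orbit_of_type B 1 \/ orbit_of_type B 3]) ->
   exists f, zero_sum_flow 3 Bs f).
Proof.
case: v Bs => [|[|n]] Bs v_gt3 // v_mod18 sts cyclic.
split; first exact: zero_sum_4flow.
case=> B [BB full_orbit [type1|type3]].
- (* A Type 1 block yields a non-short block meeting the three classes. *)
  have B_const := ntype1_const (type1 _ (mem_block_orbit B)).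
  have [B0 B0B [B0full B0inj]] :=
    exists_transversal_block sts cyclic v_mod18 v_gt3 BB B_const.
  exact: (zero_sum_3flow sts cyclic v_mod18 v_gt3 B0B B0full B0inj).
- (* A Type 3 full orbit meets the three classes itself. *)
  have Binj := ntype3_inj (block_card sts BB) (type3 _ (mem_block_orbit B)).
  have Bfull := full_orbit_not_short full_orbit.
  exact: (zero_sum_3flow sts cyclic v_mod18 v_gt3 BB Bfull Binj).
Qed.
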